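(* Let $R$ be a System F type (possibly containing the type variable $X$ free) with $X\in^+R$, and let $\gamma$ be an environment defined on the free type variables of $D_{\mathrm{param}}$. Then $\mathit{rebuild}_{X,R}\ \llbracket D_{\mathrm{param}}\to D_{\mathrm{param}}\rrbracket_\gamma\ I$.
   Context: Terms are those of the pure untyped $\lambda$-calculus, up to $\alpha$-equivalence; $=_{\beta\eta}$ is $\beta\eta$-convertibility. System F types $T ::= X\mid T\to T'\mid\forall X.T$. A relation on terms is $\beta\eta$-closed if closed under replacing either related term by a $\beta\eta$-equal one; $\mathcal{R}$ is the set of such relations; environments $\gamma$ map finitely many type variables to $\mathcal{R}$. Interpretation: $\llbracket X\rrbracket_\gamma=\gamma(X)$; $t\,\llbracket T\to T'\rrbracket_\gamma\,t'$ iff for all $a,a'$ with $a\,\llbracket T\rrbracket_\gamma\,a'$, $t\,a\,\llbracket T'\rrbracket_\gamma\,t'\,a'$; $\llbracket \forall X.T\rrbracket_\gamma=\bigcap_{r\in\mathcal{R}}\llbracket T\rrbracket_{\gamma[X\mapsto r]}$. $X\in^pT$ (polarities $p\in\{+,-\}$, $\bar p$ the other): $X\in^+X$; $X\in^pY$ for variables $Y\ne X$; $X\in^p(T\to T')$ iff $X\in^{\bar p}T$ and $X\in^pT'$; $X\in^p\forall Y.T$ iff $X\in^pT$. Terms: $I:=\lambda x.x$, $K:=\lambda x.\lambda y.x$, $t\circ t':=\lambda x.t\,(t'\,x)$. $\mathit{fmap}_{X,R}$ is defined by recursion on $R$: $\mathit{fmap}_{X,X}=I$; $\mathit{fmap}_{X,Y}=K\,I$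 ($Y\ne X$); $\mathit{fmap}_{X,R\to R'}=\lambda f.\lambda a.\,\mathit{fmap}_{X,R'}\,f\circ a\circ\mathit{fmap}_{X,R}\,f$; $\mathit{fmap}_{X,\forall Y.R}=\lambda f.\,\mathit{fmap}_{X,R}\,f$ (bound variable chosen different from $X$). $\mathit{fold}:=\lambda a.\lambda x.x\,a$; $\mathit{in}_{X,R}:=\lambda x.\lambda a.\,a\,(\mathit{fmap}_{X,R}\,(\mathit{fold}\,a)\,x)$; $\mathit{rebuild}_{X,R}:=\mathit{fold}\ \mathit{in}_{X,R}$; $D_{\mathrm{param}}:=\forall X.(R\to X)\to X$. *)

From Stdlib Require Import Arith Relations.

Inductive term : Type :=
| Var : nat -> term
| App : term -> term -> term
| Lam : term -> term.

Fixpoint lift (c : nat) (t : term) : term :=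
  match t with
  | Var n => if n <? c then Var n else Var (S n)
  | App t1 t2 => App (lift c t1) (lift c t2)
  | Lam t1 => Lam (lift (S c) t1)
  end.

Fixpoint liftn (k : nat) (t : term) : term :=
  match k with 0 => t | S k' => lift 0 (liftn k' t) end.

(* substitute u for variable k in t (u lives outside the k binders) *)
Fixpoint subst (k : nat) (u : term) (t : term) : term :=
  match t with
  | Var n => if n <? k then Var n
             else if n =? k then liftn k u
             else Var (pred n)
  | App t1 t2 => App (subst k u t1) (subst k u t2)
  | Lam t1 => Lam (subst (S k) u t1)
  end.

Inductive step : term -> term -> Prop :=
| step_beta : forall t u, step (App (Lam t) u) (subst 0 u t)
| step_eta : forall t, step (Lam (App (lift 0 t) (Var 0))) t
| step_appl : forall t t' u, step t t' -> step (App t u) (App t' u)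
| step_appr : forall t u u', step u u' -> step (App t u) (App t u')
| step_lam : forall t t', step t t' -> step (Lam t) (Lam t').

Definition beq : term -> term -> Prop := clos_refl_sym_trans term step.

Definition trel := term -> term -> Prop.

Definition be_closed (r : trel) : Prop :=
  forall t1 t2 t1' t2', beq t1 t1' -> beq t2 t2' -> r t1 t2 -> r t1' t2'.

Definition env := nat -> option trel.

Definition env_update (g : env) (X : nat) (r : trel) : env :=
  fun Y => if Y =? X then Some r else g Y.

Inductive ty : Type :=
| TVar : nat -> ty
| TArr : ty -> ty -> ty
| TAll : nat -> ty -> ty.

Fixpoint ftv (Y : nat) (T : ty) : Prop :=
  match T with
  | TVar Z => Z = Y
  | TArr T1 T2 => ftv Y T1 \/ ftv Y T2
  | TAll Z T1 => Z <> Y /\ ftv Y T1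
  end.

(* relational interpretation; an undefined variable gets the empty relation
   (irrelevant when the environment covers the free variables) *)
Fixpoint interp (g : env) (T : ty) : trel :=
  match T with
  | TVar Y => match g Y with Some r => r | None => fun _ _ => False end
  | TArr T1 T2 => fun t t' =>
      forall a a', interp g T1 a a' -> interp g T2 (App t a) (App t' a')
  | TAll Y T1 => fun t t' =>
      forall r, be_closed r -> interp (env_update g Y r) T1 t t'
  end.

(* polarity: occ X true T  is  X \in^+ T,  occ X false T  is  X \in^- T.
   A binder rebinding X makes X not occur free (alpha-renaming convention). *)
Fixpoint occ (X : nat) (p : bool) (T : ty) : Prop :=
  match T with
  | TVar Y => if Y =? X then p = true else True
  | TArr T1 T2 => occ X (negb p) T1 /\ occ X p T2
  | TAll Y T1 => if Y =? X then True else occ X p T1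
  end.

Definition tI : term := Lam (Var 0).
Definition tK : term := Lam (Lam (Var 1)).
Definition comp (t t' : term) : term :=
  Lam (App (lift 0 t) (App (lift 0 t') (Var 0))).

(* fmap_{X,R}; for a binder Y = X (so X not free; in the paper the bound
   variable is renamed away from X) we use the X-free value K I. *)
Fixpoint fmap (X : nat) (R : ty) : term :=
  match R with
  | TVar Y => if Y =? X then tI else App tK tI
  | TArr R1 R2 =>
      Lam (Lam (comp (App (liftn 2 (fmap X R2)) (Var 1))
                     (comp (Var 0) (App (liftn 2 (fmap X R1)) (Var 1)))))
  | TAll Y R1 =>
      if Y =? X then App tK tI
      else Lam (App (liftn 1 (fmap X R1)) (Var 0))
  end.

Definition tfold : term := Lam (Lam (App (Var 0) (Var 1))).

(* in_{X,R} := \x.\a. a (fmap_{X,R} (fold a) x) *)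
Definition tin (X : nat) (R : ty) : term :=
  Lam (Lam (App (Var 0)
                (App (App (liftn 2 (fmap X R)) (App tfold (Var 0))) (Var 1)))).

Definition rebuild (X : nat) (R : ty) : term := App tfold (tin X R).

Definition Dparam (X : nat) (R : ty) : ty :=
  TAll X (TArr (TArr R (TVar X)) (TVar X)).

(* Given d : D_param, a βη-closed relation r and r-related f, f', instantiate d
   at the pullback S of r along fold f, i.e. x S y iff r (x f) y.  Functoriality
   of fmap (induction on R, tracking polarity) shows that fmap (fold f) maps
   R[X:=S]-related pairs to R[X:=r]-related ones when X is positive in R, so
   in_{X,R} and f' are related at R -> X under X := S.  Parametricity of d then
   gives S (d in) (d' f'), i.e. r (d in f) (d' f'), and rebuild d f reduces to
   d in f. *)
From Stdlib Require Import Arith Relations Lia FunctionalExtensionality.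

Lemma beq_refl t : beq t t.
Proof. apply rst_refl. Qed.

Lemma beq_sym t u : beq t u -> beq u t.
Proof. apply rst_sym. Qed.

Lemma beq_trans t u v : beq t u -> beq u v -> beq t v.
Proof. apply rst_trans. Qed.

Lemma beq_appl t t' u : beq t t' -> beq (App t u) (App t' u).
Proof.
  induction 1; [apply rst_step; constructor; assumption | apply beq_refl
               | apply beq_sym; assumption | eapply beq_trans; eassumption].
Qed.

Lemma beq_appr t u u' : beq u u' -> beq (App t u) (App t u').
Proof.
  induction 1; [apply rst_step; constructor; assumption | apply beq_refl
               | apply beq_sym; assumption | eapply beq_trans; eassumption].
Qed.

Lemma beq_lam t t' : beq t t' -> beq (Lam t) (Lam t').
Proof.
  induction 1; [apply rst_step; constructor; assumption | apply beq_refl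
               | apply beq_sym; assumption | eapply beq_trans; eassumption].
Qed.

Lemma beq_beta t u v : subst 0 u t = v -> beq (App (Lam t) u) v.
Proof. intros <-. apply rst_step, step_beta. Qed.

Fixpoint closedn (n : nat) (t : term) : Prop :=
  match t with
  | Var m => m < n
  | App a b => closedn n a /\ closedn n b
  | Lam a => closedn (S n) a
  end.

Ltac compare_indices :=
  repeat (simpl; match goal with
    | |- context [?a <? ?b] => destruct (Nat.ltb_spec a b)
    | |- context [?a =? ?b] => destruct (Nat.eqb_spec a b)
    | |- context [match ?k with 0 => _ | S _ => _ end] => destruct k
    end); try (exfalso; lia).

Lemma closedn_le t : forall n m, n <= m -> closedn n t -> closedn m t.
Proof.
  induction t; simpl; intros n0 m Hle H.
  - lia.
  - destruct H; split; eauto.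
  - apply (IHt (S n0)); [lia | assumption].
Qed.

Lemma lift_closedn t : forall n c, n <= c -> closedn n t -> lift c t = t.
Proof.
  induction t; simpl; intros n0 c Hle H.
  - compare_indices; reflexivity.
  - destruct H; rewrite (IHt1 n0), (IHt2 n0); auto.
  - rewrite (IHt (S n0)); auto; lia.
Qed.

Lemma subst_closedn t : forall n k u, n <= k -> closedn n t -> subst k u t = t.
Proof.
  induction t; simpl; intros n0 k u Hle H.
  - compare_indices; reflexivity.
  - destruct H; rewrite (IHt1 n0), (IHt2 n0); auto.
  - rewrite (IHt (S n0)); auto; lia.
Qed.

Lemma liftn_closed t k : closedn 0 t -> liftn k t = t.
Proof.
  intro H; induction k as [|k IHk]; simpl; [reflexivity|].
  rewrite IHk. apply (lift_closedn _ 0); [lia | assumption].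
Qed.

Lemma lift_lift t : forall c c', c' <= c -> lift (S c) (lift c' t) = lift c' (lift c t).
Proof.
  induction t; simpl; intros c c' Hle.
  - compare_indices; reflexivity.
  - rewrite IHt1, IHt2; auto.
  - rewrite IHt; auto; lia.
Qed.

Lemma lift_liftn u : forall k c, c <= k -> lift c (liftn k u) = liftn (S k) u.
Proof.
  induction k as [|k IHk]; intros c Hc; simpl.
  - replace c with 0 by lia; reflexivity.
  - destruct c; [reflexivity|].
    rewrite lift_lift, IHk by lia; reflexivity.
Qed.

Lemma subst_lift t : forall k u, subst k u (lift k t) = t.
Proof.
  induction t; simpl; intros k u.
  - compare_indices; reflexivity.
  - rewrite IHt1, IHt2; reflexivity.
  - rewrite IHt; reflexivity.
Qed.

Lemma subst_lift_comm t : forall k c u, c <= k ->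
  subst (S k) u (lift c t) = lift c (subst k u t).
Proof.
  induction t; simpl; intros k c u Hle.
  - destruct (Nat.eqb_spec n k) as [->|Hnk].
    + compare_indices. rewrite !lift_liftn by lia. reflexivity.
    + compare_indices; try reflexivity.
      destruct n; [lia | compare_indices; reflexivity].
  - rewrite IHt1, IHt2; auto.
  - rewrite IHt; auto; lia.
Qed.

Lemma fmap_closed X R : closedn 0 (fmap X R).
Proof.
  induction R as [Y|R1 IH1 R2 IH2|Y R1 IH]; simpl.
  - destruct (Y =? X); simpl; lia.
  - unfold comp; simpl.
    rewrite !(lift_closedn (fmap X R1) 0), !(lift_closedn (fmap X R2) 0) by (auto; lia).
    repeat split; try lia; apply (closedn_le _ 0); auto; lia.
  - destruct (Y =? X); simpl; [lia|].
    rewrite !(lift_closedn (fmap X R1) 0) by (auto; lia).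
    split; [apply (closedn_le _ 0); auto; lia | lia].
Qed.

Lemma lift_fmap X R c : lift c (fmap X R) = fmap X R.
Proof. apply (lift_closedn _ 0); [lia | apply fmap_closed]. Qed.

Lemma subst_fmap X R k u : subst k u (fmap X R) = fmap X R.
Proof. apply (subst_closedn _ 0); [lia | apply fmap_closed]. Qed.

Lemma beq_KI f a : beq (App (App (App tK tI) f) a) a.
Proof.
  eapply beq_trans. { apply beq_appl, beq_appl, beq_beta. reflexivity. }
  eapply beq_trans. { apply beq_appl, beq_beta. reflexivity. }
  apply beq_beta. reflexivity.
Qed.

Lemma beq_fold f x : beq (App (App tfold f) x) (App x f).
Proof.
  eapply beq_trans. { apply beq_appl, beq_beta. reflexivity. }
  apply beq_beta. simpl. rewrite subst_lift. reflexivity.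
Qed.

Lemma fmap_arrow_beq X R1 R2 f a b :
  beq (App (App (App (fmap X (TArr R1 R2)) f) a) b)
      (App (App (fmap X R2) f) (App a (App (App (fmap X R1) f) b))).
Proof.
  simpl fmap; unfold comp; simpl; rewrite !lift_fmap.
  eapply beq_trans.
  { apply beq_appl, beq_appl, beq_appl, beq_lam, beq_lam, beq_lam, beq_appr.
    apply beq_beta. simpl. rewrite subst_fmap. reflexivity. }
  eapply beq_trans. { apply beq_appl, beq_appl, beq_beta. reflexivity. }
  eapply beq_trans. { apply beq_appl, beq_beta. reflexivity. }
  apply beq_beta. simpl. rewrite !subst_fmap, subst_lift_comm, !subst_lift by lia.
  reflexivity.
Qed.

Lemma fmap_all_beq X Y R f a : Y <> X ->
  beq (App (App (fmap X (TAll Y R)) f) a) (App (App (fmap X R) f) a).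
Proof.
  intro HYX; simpl fmap. destruct (Nat.eqb_spec Y X); [contradiction|].
  apply beq_appl, beq_beta. simpl. rewrite subst_lift. reflexivity.
Qed.

Lemma tin_beq X R a f :
  beq (App (App (tin X R) a) f) (App f (App (App (fmap X R) (App tfold f)) a)).
Proof.
  unfold tin. rewrite liftn_closed by apply fmap_closed.
  eapply beq_trans. { apply beq_appl, beq_beta. reflexivity. }
  apply beq_beta. simpl. rewrite !subst_fmap, subst_lift. reflexivity.
Qed.

Definition env_closed (g : env) : Prop := forall Y r, g Y = Some r -> be_closed r.

Lemma be_closed_beq_l (r : trel) t u v : be_closed r -> beq t u -> r u v -> r t v.
Proof. intros Hr Htu. apply Hr; [apply beq_sym, Htu | apply beq_refl]. Qed.

Lemma env_closed_update g X r : env_closed g -> be_closed r -> env_closed (env_update g X r).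
Proof.
  unfold env_closed, env_update; intros Hg Hr Y r'.
  destruct (Y =? X); [intros [= <-]; assumption | apply Hg].
Qed.

Lemma interp_be_closed T : forall g, env_closed g -> be_closed (interp g T).
Proof.
  induction T as [Y|T1 IH1 T2 IH2|Y T IH]; simpl; intros g Hg.
  - destruct (g Y) eqn:E; [eapply Hg; eassumption | intros ? ? ? ? ? ? []].
  - intros t1 t2 t1' t2' H1 H2 H a a' Ha.
    eapply IH2; [assumption | apply beq_appl, H1 | apply beq_appl, H2 | auto].
  - intros t1 t2 t1' t2' H1 H2 H r Hr.
    eapply IH; [apply env_closed_update | | |]; eauto.
Qed.

Lemma env_update_eq g X r : env_update g X r X = Some r.
Proof. unfold env_update. rewrite Nat.eqb_refl. reflexivity. Qed.

Lemma env_update_neq g X Y r : Y <> X -> env_update g X r Y = g Y.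
Proof. intro H. unfold env_update. destruct (Nat.eqb_spec Y X); congruence. Qed.

Lemma env_update_shadow g X r r' : env_update (env_update g X r) X r' = env_update g X r'.
Proof. apply functional_extensionality; intro Y; unfold env_update. destruct (Y =? X); reflexivity. Qed.

Lemma env_update_comm g X Y r r' : Y <> X ->
  env_update (env_update g X r) Y r' = env_update (env_update g Y r') X r.
Proof.
  intro H; apply functional_extensionality; intro Z; unfold env_update.
  destruct (Nat.eqb_spec Z Y), (Nat.eqb_spec Z X); congruence.
Qed.

Definition pullback (f : term) (r : trel) : trel := fun x y => r (App f x) y.

Lemma pullback_be_closed f r : be_closed r -> be_closed (pullback f r).
Proof. intros Hr t1 t2 t1' t2' H1 H2. exact (Hr _ _ _ _ (beq_appr f _ _ H1) H2). Qed.

Lemma fmap_pullback X f r R : be_closed r -> forall g, env_closed g ->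
  (occ X true R -> forall a a', interp (env_update g X (pullback f r)) R a a' ->
      interp (env_update g X r) R (App (App (fmap X R) f) a) a') /\
  (occ X false R -> forall a a', interp (env_update g X r) R a a' ->
      interp (env_update g X (pullback f r)) R (App (App (fmap X R) f) a) a').
Proof.
  intros Hr.
  assert (HS : be_closed (pullback f r)) by (apply pullback_be_closed, Hr).
  induction R as [Y|R1 IH1 R2 IH2|Y R1 IH]; intros g Hg;
    pose proof (env_closed_update g X _ Hg Hr) as Hgr;
    pose proof (env_closed_update g X _ Hg HS) as HgS.
  - simpl. destruct (Nat.eqb_spec Y X) as [->|HYX].
    + rewrite !env_update_eq. split; intros Ho a a' Ha; [|discriminate].
      apply (be_closed_beq_l r _ (App f a));
        [exact Hr | apply beq_appl, beq_beta; reflexivity | exact Ha].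
    + rewrite !env_update_neq by exact HYX.
      split; intros _ a a' Ha;
        (apply (be_closed_beq_l _ _ a); [apply (interp_be_closed (TVar Y) g Hg) | apply beq_KI | exact Ha]).
  - simpl occ. split; intros [Ho1 Ho2] a a' Ha b b' Hb;
      (eapply be_closed_beq_l; [apply interp_be_closed; assumption | apply fmap_arrow_beq |]).
    + apply (proj1 (IH2 g Hg) Ho2), Ha, (proj2 (IH1 g Hg) Ho1), Hb.
    + apply (proj2 (IH2 g Hg) Ho2), Ha, (proj1 (IH1 g Hg) Ho1), Hb.
  - simpl occ. destruct (Nat.eqb_spec Y X) as [->|HYX].
    + (* X is rebound, so both environments agree under the binder *)
      split; intros _ a a' Ha;
        (eapply be_closed_beq_l; [apply interp_be_closed; assumption | simpl fmap; rewrite Nat.eqb_refl; apply beq_KI |]);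
        intros r' Hr'; specialize (Ha r' Hr'); rewrite env_update_shadow in Ha |- *; exact Ha.
    + split; intros Ho a a' Ha;
        (eapply be_closed_beq_l; [apply interp_be_closed; assumption | apply fmap_all_beq, HYX |]);
        intros r' Hr'; specialize (Ha r' Hr'); rewrite env_update_comm in Ha |- * by exact HYX;
        apply IH; auto; apply env_closed_update; assumption.
Qed.

Theorem mainTheorem10 (X : nat) (R : ty) (g : env) :
  occ X true R ->
  (forall Y r, g Y = Some r -> be_closed r) ->
  (exists N, forall Y, N <= Y -> g Y = None) ->
  (forall Y, ftv Y (Dparam X R) -> g Y <> None) ->
  interp g (TArr (Dparam X R) (Dparam X R)) (rebuild X R) tI.
Proof.
  intros Hpos Hg _ _ d d' Hd.
  eapply interp_be_closed;
    [exact Hg | apply beq_sym, beq_fold | apply beq_sym, beq_beta; reflexivity |].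
  simpl; intros r Hr f f' Hf; rewrite env_update_eq.
  simpl in Hf; rewrite env_update_eq in Hf.
  set (S := pullback (App tfold f) r).
  assert (Hin : interp (env_update g X S) (TArr R (TVar X)) (tin X R) f').
  { simpl; intros a a' Ha; rewrite env_update_eq; unfold S, pullback.
    apply (be_closed_beq_l r _ (App (App (tin X R) a) f)); [exact Hr | apply beq_fold |].
    apply (be_closed_beq_l r _ _ _ Hr (tin_beq X R a f)), Hf.
    exact (proj1 (fmap_pullback X (App tfold f) r R Hr g Hg) Hpos a a' Ha). }
  specialize (Hd S (pullback_be_closed _ _ Hr) (tin X R) f' Hin).
  simpl in Hd; rewrite env_update_eq in Hd.
  apply (be_closed_beq_l r _ _ _ Hr (beq_sym _ _ (beq_fold f _))), Hd.
Qed.
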